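(* Let $\mathcal{M}$ be a set of mappings and $q(\vec x)\leftarrow L_1(\vec v_1),\dots,L_n(\vec v_n)$ a conjunctive query such that all rows of the answer template matrix of $\mathrm{unf}(q,\mathrm{wrap}(\mathcal{M}))$ are equal to some tuple $\vec f$ of function symbols. Let $L_i(\vec v_i)$ be an atom of $q$ with $\vec v_i\subseteq\vec x$ (as sets of variables). Then for every pair of rules $$r_1=q_u(\vec f(\vec y))\leftarrow V_1(\vec y_1),\dots,V_i(\vec y_i),\dots,V_n(\vec y_n),\qquad r_2=q'_u(\vec f(\vec y'))\leftarrow V'_1(\vec y'_1),\dots,V'_i(\vec y'_i),\dots,V'_n(\vec y'_n)$$ in the program of $\mathrm{unf}(q,\mathrm{wrap}(\mathcal{M}))$, where the $j$-th body atom comes from the mapping matched with $L_j$, it holds that $V_i=V'_i$.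
   Context: A mapping is $L(\vec f(\vec x))\leftsquigarrow V(\vec x)$ with $L$ a concept or role name, $\vec f(\vec x)$ a tuple of terms each of the form $g(\vec y)$ ($g$ a function symbol, $\vec y\subseteq\vec x$), and $V$ a view name. Signature: $\mathrm{sign}(m)=(L,\vec f)$. Unfolding of a CQ $q(\vec x)\leftarrow L_1(\vec v_1),\dots,L_n(\vec v_n)$: the non-recursive Datalog query $(q_{\mathrm{unf}}(\vec x),\Pi)$ where $\Pi$ is a minimal (up to renaming) set of rules containing, for every tuple $(m_1,\dots,m_n)$ of mappings with $m_i=L_i(\vec f_i(\vec x_i))\leftsquigarrow V_i(\vec z_i)$ and every mgu $\sigma$ of $\{(L_i(\vec v_i),L_i(\vec f_i(\vec x_i)))\}$, the rule $q_{\mathrm{unf}}(\sigma(\vec x))\leftarrow V_1(\sigma(\vec z_1)),\dots,V_n(\sigma(\vec z_n))$. Wrap: for each signature $(L,\vec f)$, the mappings of that signature $\{L(\vec f(\vec v_i))\leftsquigarrow V_i(\vec v_i)\}_i$ are replaced by the single mapping $L(\vec f(\vec v))\leftsquigarrow W(\vec v)$ with $W$ a fresh view for $(W(\vec v),\{W(\vec v_i)\leftarrow V_i(\vec v_i)\}_i)$; $\mathrm{wrap}(\mathcal{M})$ is the union over all signatures (so it contains at most one mapping per signature). Answer template matrix: if the rules of an unfolding are $q_{\mathrm{unf}}(\vec f_j(\vec y_j))\leftarrow V^j_1,\dots,V^j_n$ for $1\le j\le m$, where $\vec f_j$ is the tuple of function symbols in the head, its rows are $\vec f_1,\dots,\vec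 f_m$. *)

From Stdlib Require List.
From mathcomp Require Import all_boot.
Set Implicit Arguments. Unset Strict Implicit. Unset Printing Implicit Defensive.

(** Symbols: concept/role names, function symbols and (base) view names are nats. *)

(** View names: base views of the original mappings, and the fresh views
    [VWrap L fs] introduced by [wrap] for the signature [(L, fs)]. *)
Inductive view := VBase of nat | VWrap of nat & seq nat.

(** A mapping  L(g_1(y_1),...,g_k(y_k)) <~ V(z) . *)
Record mapping := Mapping {
  m_pred  : nat;
  m_args  : seq (nat * seq nat);    (* the terms g(y): function symbol and variables *)
  m_view  : view;
  m_vvars : seq nat
}.

Definition sign (m : mapping) : nat * seq nat := (m_pred m, map fst (m_args m)).

(** The single wrapped mapping of signature (L, fs):  L(f(v)) <~ W(v),
    with v a tuple of pairwise distinct variables of the right arities. *)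
Fixpoint wrap_args (ar : nat -> nat) (fs : seq nat) (off : nat) : seq (nat * seq nat) :=
  match fs with
  | [::] => [::]
  | g :: fs' => (g, iota off (ar g)) :: wrap_args ar fs' (off + ar g)
  end.

Definition wrap_map (ar : nat -> nat) (sg : nat * seq nat) : mapping :=
  {| m_pred := sg.1; m_args := wrap_args ar sg.2 0;
     m_view := VWrap sg.1 sg.2; m_vvars := iota 0 (sumn (map ar sg.2)) |}.

Definition in_wrap (ar : nat -> nat) (M : mapping -> Prop) (m : mapping) : Prop :=
  exists m0, M m0 /\ m = wrap_map ar (sign m0).

Definition respects_arity (ar : nat -> nat) (M : mapping -> Prop) : Prop :=
  forall m, M m -> forall p, p \in m_args m -> size p.2 = ar p.1.

Record qatom := QAtom { qa_pred : nat; qa_vars : seq nat }.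
Record cq := CQ { q_head : seq nat; q_body : seq qatom }.

(** First-order terms over variables [nat * nat]: the query variable x is
    (0, x), the variable y of the mapping matched with the j-th atom
    (0-based) is (j.+1, y)  (standard renaming apart). *)
Definition var := (nat * nat)%type.
Inductive term := Var of var | App of nat & seq term.

Fixpoint subst (s : var -> term) (t : term) : term :=
  match t with
  | Var x => s x
  | App f ts => App f (map (subst s) ts)
  end.

(** atoms are encoded as terms headed by the predicate name *)
Definition qatom_term (a : qatom) : term :=
  App (qa_pred a) (map (fun v => Var (0, v)) (qa_vars a)).
Definition matom_term (j : nat) (m : mapping) : term :=
  App (m_pred m) (map (fun p => App p.1 (map (fun y => Var (j.+1, y)) p.2)) (m_args m)).

Definition unifier (s : var -> term) (E : seq (term * term)) : Prop :=
  forall p, List.In p E -> subst s p.1 = subst s p.2.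
Definition mgu (s : var -> term) (E : seq (term * term)) : Prop :=
  unifier s E /\
  forall t, unifier t E -> exists l, forall x, t x = subst l (s x).

(** Datalog rules q_unf(head) <- V_1(..),...,V_n(..) *)
Record rule := Rule { r_head : seq term; r_body : seq (view * seq term) }.

Definition qatom0 := QAtom 0 [::].
Definition mapping0 := Mapping 0 [::] (VBase 0) [::].
Definition batom0 : view * seq term := (VBase 0, [::]).

Section Unf.
Variables (ar : nat -> nat) (M : mapping -> Prop) (q : cq).

Definition unf_pairs (ms : seq mapping) : seq (term * term) :=
  mkseq (fun j => (qatom_term (nth qatom0 (q_body q) j),
                   matom_term j (nth mapping0 ms j))) (size (q_body q)).

Definition unf_rule (ms : seq mapping) (s : var -> term) : rule :=
  {| r_head := map (fun x => s (0, x)) (q_head q);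
     r_body := mkseq (fun j => let m := nth mapping0 ms j in
                      (m_view m, map (fun z => s (j.+1, z)) (m_vvars m)))
                     (size (q_body q)) |}.

(** r is (up to renaming) a rule of the program of unf(q, wrap(M)) *)
Definition in_unf_wrap (r : rule) : Prop :=
  exists (ms : seq mapping) (s : var -> term),
    [/\ size ms = size (q_body q),
        (forall m, List.In m ms -> in_wrap ar M m),
        mgu s (unf_pairs ms) & r = unf_rule ms s].
End Unf.

Definition head_sym (t : term) : option nat :=
  match t with Var _ => None | App g _ => Some g end.
Definition template_row (r : rule) : seq (option nat) := map head_sym (r_head r).

From mathcomp Require Import all_boot.

Set Implicit Arguments.
Unset Strict Implicit.
Unset Printing Implicit Defensive.

(* The view of a mapping of wrap(M) is the fresh view W named after its
   signature (L, g).  Unifying the i-th atom L_i(v_i) with such a mapping binds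
   each variable of v_i to a term headed by the corresponding symbol of g;
   when v_i consists of answer variables these head symbols appear in the
   answer template row, which is f for every rule.  So g, hence the view, is
   read off f and does not depend on the rule. *)

Lemma map_fst_wrap_args ar fs off : map fst (wrap_args ar fs off) = fs.
Proof. by elim: fs off => //= g fs IH off; rewrite IH. Qed.

Lemma in_wrap_view ar M m :
  in_wrap ar M m -> m_view m = VWrap (m_pred m) (map fst (m_args m)).
Proof. by case=> m0 [_ ->]; rewrite /= map_fst_wrap_args. Qed.

Lemma In_nth {T : Type} (x0 : T) s n : n < size s -> List.In (nth x0 s n) s.
Proof. by elim: s n => //= x s IH [|n] /= lt_n; [left | right; apply: IH]. Qed.

Section UnfoldingRules.
Variables (q : cq) (ms : seq mapping) (s : var -> term).

Lemma In_unf_pairs j : j < size (q_body q) ->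
  List.In (qatom_term (nth qatom0 (q_body q) j), matom_term j (nth mapping0 ms j))
          (unf_pairs q ms).
Proof.
move=> lt_j.
have := In_nth (qatom_term qatom0, matom_term 0 mapping0) (_ : j < size (unf_pairs q ms)).
by rewrite nth_mkseq //; apply; rewrite size_mkseq.
Qed.

Lemma unifier_head_syms j : unifier s (unf_pairs q ms) -> j < size (q_body q) ->
  qa_pred (nth qatom0 (q_body q) j) = m_pred (nth mapping0 ms j) /\
  [seq head_sym (s (0, v)) | v <- qa_vars (nth qatom0 (q_body q) j)]
    = [seq Some p.1 | p <- m_args (nth mapping0 ms j)].
Proof.
move=> unif_s lt_j; have := unif_s _ (In_unf_pairs lt_j).
rewrite /qatom_term /matom_term /= => -[-> /(congr1 (map head_sym))].
by rewrite -!map_comp => ->.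
Qed.

Lemma unf_rule_view j : j < size (q_body q) ->
  (nth batom0 (r_body (unf_rule q ms s)) j).1 = m_view (nth mapping0 ms j).
Proof. by move=> lt_j; rewrite nth_mkseq. Qed.

Lemma unf_rule_head_sym v : v \in q_head q ->
  head_sym (s (0, v)) = nth None (template_row (unf_rule q ms s)) (index v (q_head q)).
Proof. by move=> vP; rewrite /template_row -map_comp (nth_map v) ?index_mem ?nth_index. Qed.

End UnfoldingRules.

Lemma unf_wrap_view ar M q r i :
  in_unf_wrap ar M q r -> i < size (q_body q) ->
  {subset qa_vars (nth qatom0 (q_body q) i) <= q_head q} ->
  exists2 g, (nth batom0 (r_body r) i).1 = VWrap (qa_pred (nth qatom0 (q_body q) i)) g &
    map Some g = [seq nth None (template_row r) (index v (q_head q))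
                 | v <- qa_vars (nth qatom0 (q_body q) i)].
Proof.
move=> [ms [s [size_ms wrap_ms [unif_s _] ->]]] lt_i answer_vars.
have [pred_eq syms_eq] := unifier_head_syms unif_s lt_i.
have wrap_mi : in_wrap ar M (nth mapping0 ms i).
  by apply: wrap_ms; apply: In_nth; rewrite size_ms.
exists (map fst (m_args (nth mapping0 ms i))).
  by rewrite unf_rule_view // (in_wrap_view wrap_mi) pred_eq.
rewrite -map_comp -syms_eq; apply/eq_in_map => v /answer_vars vP.
exact: unf_rule_head_sym.
Qed.

Theorem theorem7 (ar : nat -> nat) (M : mapping -> Prop) (q : cq) (f : seq nat)
    (i : nat) :
  respects_arity ar M ->
  (forall r, in_unf_wrap ar M q r -> template_row r = map Some f) ->
  i < size (q_body q) ->
  {subset qa_vars (nth qatom0 (q_body q) i) <= q_head q} ->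
  forall r1 r2, in_unf_wrap ar M q r1 -> in_unf_wrap ar M q r2 ->
    (nth batom0 (r_body r1) i).1 = (nth batom0 (r_body r2) i).1.
Proof.
move=> _ template_f lt_i answer_vars r1 r2 unf_r1 unf_r2.
have [g1 -> g1_syms] := unf_wrap_view unf_r1 lt_i answer_vars.
have [g2 -> g2_syms] := unf_wrap_view unf_r2 lt_i answer_vars.
rewrite (template_f _ unf_r1) in g1_syms; rewrite (template_f _ unf_r2) in g2_syms.
by congr VWrap; apply: (inj_map (@Some_inj _)); rewrite g1_syms g2_syms.
Qed.
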